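(* Let $M$ be a finite monoid and $k$ a field. If there exists an idempotent $e\in M$ such that the monoid $eMe$ has two irreducible elements that are not associates (in $eMe$), then the monoid algebra $kM$ is of infinite representation type.
   Context: For an idempotent $e\in M$, $eMe=\{eme: m\in M\}$ is a monoid with identity $e$ under the multiplication of $M$. A non-unit $p$ in a monoid $N$ is irreducible if whenever $p=ab$ with $a,b\in N$, then $a$ or $b$ is a unit of $N$. Two elements $a,b\in N$ are associates if there exist units $u,v\in N$ with $a=ubv$. A finite-dimensional $k$-algebra is of infinite representation type if it has infinitely many isomorphism classes of finite-dimensional indecomposable modules. *)

From HB Require Import structures.
From mathcomp Require Import all_boot all_order all_algebra.
Set Implicit Arguments. Unset Strict Implicit. Unset Printing Implicit Defensive.
Import GRing.Theory.
Local Open Scope ring_scope.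

Definition is_monoid (M : Type) (mul : M -> M -> M) (one : M) : Prop :=
  (forall a b c, mul a (mul b c) = mul (mul a b) c) /\
  (forall a, mul one a = a) /\ (forall a, mul a one = a).

Section Corner.
Variables (M : Type) (mul : M -> M -> M) (e : M).

Definition idempotent_el : Prop := mul e e = e.

Definition in_corner (x : M) : Prop := exists m, x = mul (mul e m) e.

Definition corner_unit (u : M) : Prop :=
  in_corner u /\ exists v, in_corner v /\ mul u v = e /\ mul v u = e.

Definition corner_irreducible (p : M) : Prop :=
  in_corner p /\ ~ corner_unit p /\
  forall a b, in_corner a -> in_corner b -> p = mul a b ->
    corner_unit a \/ corner_unit b.

Definition corner_associates (a b : M) : Prop :=
  exists u v, corner_unit u /\ corner_unit v /\ a = mul (mul u b) v.
End Corner.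

(* Finite-dimensional (left) kM-modules are represented as matrix
   representations of the monoid M: a unital monoid homomorphism
   M -> 'M[k]_n (acting on column vectors k^n). *)
Section Reps.
Variables (k : fieldType) (M : Type) (mul : M -> M -> M) (one : M).

Definition is_rep (n : nat) (rho : M -> 'M[k]_n) : Prop :=
  rho one = 1%:M /\ forall a b, rho (mul a b) = rho a *m rho b.

Definition rep_iso (n m : nat) (rho : M -> 'M[k]_n) (sigma : M -> 'M[k]_m)
  : Prop :=
  exists (P : 'M[k]_(n, m)) (Q : 'M[k]_(m, n)),
    P *m Q = 1%:M /\ Q *m P = 1%:M /\ forall x, rho x *m P = P *m sigma x.

Definition rep_dsum (a b : nat) (r1 : M -> 'M[k]_a) (r2 : M -> 'M[k]_b)
  : M -> 'M[k]_(a + b) :=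
  fun x => block_mx (r1 x) 0 0 (r2 x).

Definition rep_indecomposable (n : nat) (rho : M -> 'M[k]_n) : Prop :=
  (0 < n)%N /\
  forall (a b : nat) (r1 : M -> 'M[k]_a) (r2 : M -> 'M[k]_b),
    is_rep r1 -> is_rep r2 -> (0 < a)%N -> (0 < b)%N ->
    ~ rep_iso rho (rep_dsum r1 r2).

(* infinite representation type: infinitely many isomorphism classes of
   finite-dimensional indecomposable modules, i.e. for every N there are
   N pairwise non-isomorphic f.d. indecomposable modules. *)
Definition infinite_rep_type : Prop :=
  forall N : nat, exists (dim : 'I_N -> nat)
    (rho : forall i : 'I_N, M -> 'M[k]_(dim i)),
    (forall i, is_rep (rho i) /\ rep_indecomposable (rho i)) /\
    (forall i j, i != j -> ~ rep_iso (rho i) (rho j)).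
End Reps.

From mathcomp Require Import all_boot all_order all_algebra.
From mathcomp Require Import zify.
From Stdlib Require Import ClassicalEpsilon.
Set Implicit Arguments. Unset Strict Implicit. Unset Printing Implicit Defensive.
Import GRing.Theory.
Local Open Scope ring_scope.

(* For every n, the Kronecker module V_n = k^n (+) k^n, on which p acts by
   [0 1; 0 0], q by [0 J; 0 0] (J the nilpotent Jordan block), the units of
   eMe by 1 and all other elements of eMe by 0, is an eMe-module: in the
   finite monoid eMe a product of two non-units is neither a unit nor an
   associate of an irreducible element.  As J has a one-dimensional kernel,
   the only idempotent endomorphisms of V_n are 0 and 1.  The coinduced
   kM-module W_n = Hom_eMe(kMe, V_n) satisfies W_n e = V_n, and an
   endomorphism of W_n is determined by its restriction to W_n e, so W_n is
   again indecomposable.  As 2n <= dim W_n <= 2n|M|, letting n grow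
   geometrically gives pairwise non-isomorphic indecomposable kM-modules. *)

Definition endo_idempotents_trivial (k : fieldType) (I : Type) n
    (rho : I -> 'M[k]_n) : Prop :=
  forall E : 'M[k]_n, E *m E = E -> (forall i, E *m rho i = rho i *m E) ->
    E = 0 \/ E = 1%:M.

(** * Idempotents commuting with the Kronecker module *)

Section NilpotentCommutant.
Variables (k : fieldType) (n : nat) (N : 'M[k]_n) (w : 'rV[k]_n).
Hypothesis N_nilpotent : exists m, N ^+ m = 0.
Hypothesis kerN : forall v : 'rV[k]_n, v *m N = 0 -> exists c, v = c *: w.
Hypothesis w_neq0 : w != 0.

Lemma commutant_fixes_ker (f : 'M[k]_n) (v : 'rV[k]_n) :
  f *m N = N *m f -> v *m f = v -> v != 0 -> w *m f = w.
Proof.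
move=> fN; have [m Nm] := N_nilpotent.
have : v *m N ^+ m = 0 by rewrite Nm mulmx0.
elim: m v {Nm} => [|m IHm] v vNm vf v_neq0.
  by rewrite expr0 -idmxE mulmx1 in vNm; rewrite vNm eqxx in v_neq0.
have [vN0 | vN_neq0] := eqVneq (v *m N) 0.
  have [c v_cw] := kerN vN0.
  have c_neq0 : c != 0 by apply: contraNneq v_neq0 => c0; rewrite v_cw c0 scale0r.
  by apply: (scalerI c_neq0); rewrite scalemxAl -v_cw vf.
apply: (IHm (v *m N)) => //; last by rewrite -mulmxA -fN mulmxA vf.
by rewrite -mulmxA mulmxE -exprS.
Qed.

Lemma idempotent_commutant_fixes_ker (f : 'M[k]_n) :
  f *m f = f -> f *m N = N *m f -> f != 0 -> w *m f = w.
Proof.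
move=> ff fN f_neq0.
have [i fi_neq0] : exists i, row i f != 0.
  apply/existsP; rewrite -negb_forall; apply: contra f_neq0 => /forallP f0.
  by apply/eqP/row_matrixP => i; rewrite row0; apply/eqP.
by apply: (commutant_fixes_ker fN _ fi_neq0); rewrite -row_mul ff.
Qed.

Lemma nilpotent_idempotent_trivial (f : 'M[k]_n) :
  f *m f = f -> f *m N = N *m f -> f = 0 \/ f = 1%:M.
Proof.
move=> ff fN; have [-> | f_neq0] := eqVneq f 0; first by left.
have [f1 | f1_neq0] := eqVneq (1%:M - f) 0.
  by right; apply/eqP; rewrite eq_sym -subr_eq0 f1.
have w1f : w *m (1%:M - f) = w.
  apply: idempotent_commutant_fixes_ker f1_neq0.
  - by rewrite mulmxBl !mulmxBr !mul1mx mulmx1 ff subrr subr0.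
  - by rewrite mulmxBl mulmxBr mul1mx mulmx1 fN.
move: w1f; rewrite mulmxBr mulmx1 (idempotent_commutant_fixes_ker ff fN f_neq0) subrr.
by move/eqP; rewrite eq_sym (negPf w_neq0).
Qed.
End NilpotentCommutant.

Section JordanBlock.
Variables (k : fieldType) (n' : nat).
Local Notation n := n'.+1.

Definition jordan_block : 'M[k]_n := \matrix_(i, j) ((j : nat) == i.+1)%:R.
Local Notation J := jordan_block.

Lemma jordan_block_expE s (i j : 'I_n) : (J ^+ s) i j = ((j : nat) == (i + s)%N)%:R.
Proof.
elim: s j => [|s IHs] j; first by rewrite expr0 -idmxE mxE addn0 eq_sym.
rewrite exprSr -mulmxE mxE.
under eq_bigr => l _ do rewrite IHs mxE.
have [lt_is_n | le_n_is] := ltnP (i + s) n.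
  rewrite (bigD1 (Ordinal lt_is_n)) //= eqxx mul1r big1 ?addr0 ?addnS //.
  by move=> l; rewrite -val_eqE /= => /negbTE ->; rewrite mul0r.
rewrite big1 => [|l _]; last by rewrite ltn_eqF ?mul0r // (leq_trans _ le_n_is).
by rewrite ltn_eqF // addnS ltnS (leq_trans _ le_n_is) // ltnW.
Qed.

Lemma jordan_block_nilpotent : J ^+ n = 0.
Proof.
apply/matrixP => i j; rewrite jordan_block_expE mxE ltn_eqF //.
by rewrite (leq_trans (ltn_ord j)) // leq_addl.
Qed.

Lemma mulmx_jordan_block (v : 'rV[k]_n) (i j : 'I_n) :
  j = i.+1 :> nat -> (v *m J) 0 j = v 0 i.
Proof.
move=> ji; rewrite mxE (bigD1 i) //= mxE ji eqxx mulr1 big1 ?addr0 //.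
by move=> l; rewrite mxE ji eqSS eq_sym -val_eqE => /negbTE ->; rewrite mulr0.
Qed.

Lemma jordan_block_ker (v : 'rV[k]_n) :
  v *m J = 0 -> v = v 0 ord_max *: delta_mx 0 ord_max.
Proof.
move=> vJ0; apply/matrixP => a j; rewrite (ord1 a) !mxE /=.
have [-> | j_neq_max] := eqVneq j ord_max; first by rewrite mulr1.
have lt_j : (j.+1 < n)%N by rewrite ltnS ltn_neqAle -ltnS ltn_ord andbT.
by rewrite mulr0 -(@mulmx_jordan_block v j (Ordinal lt_j)) // vJ0 mxE.
Qed.

Lemma jordan_block_idempotent_trivial (f : 'M[k]_n) :
  f *m f = f -> f *m J = J *m f -> f = 0 \/ f = 1%:M.
Proof.
apply: (nilpotent_idempotent_trivial (w := delta_mx 0 ord_max)).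
- by exists n; exact: jordan_block_nilpotent.
- by move=> v /jordan_block_ker v_eq; exists (v 0 ord_max).
- by apply/eqP => /matrixP/(_ 0 ord_max); rewrite !mxE !eqxx => /eqP; rewrite oner_eq0.
Qed.
End JordanBlock.

Section KroneckerModule.
Variables (k : fieldType) (n : nat) (J : 'M[k]_n).
Hypothesis J_idempotent_trivial :
  forall f : 'M[k]_n, f *m f = f -> f *m J = J *m f -> f = 0 \/ f = 1%:M.

Lemma kronecker_idempotent_trivial (E : 'M[k]_(n + n)) : E *m E = E ->
  E *m block_mx 0 1%:M 0 0 = block_mx 0 1%:M 0 0 *m E ->
  E *m block_mx 0 J 0 0 = block_mx 0 J 0 0 *m E -> E = 0 \/ E = 1%:M.
Proof.
rewrite -[E]submxK; move: (ulsubmx E) (ursubmx E) (dlsubmx E) (drsubmx E) => a b c d.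
rewrite !mulmx_block !mulmx0 !mul0mx !mulmx1 !mul1mx !addr0 !add0r.
case/eq_block_mx => aa ab_b _ _ /eq_block_mx [c0 ad _ _] /eq_block_mx [_ aJ _ _].
subst c d; rewrite mulmx0 addr0 in aa.
have [a0 | a1] := J_idempotent_trivial aa aJ; subst a.
  by left; rewrite mul0mx mulmx0 addr0 in ab_b; rewrite -ab_b block_mx0.
right; rewrite mulmx1 mul1mx -[RHS]addr0 in ab_b.
by rewrite (addrI _ ab_b) -scalar_mx_block.
Qed.
End KroneckerModule.

(** * The corner monoid eMe *)

Section CornerMonoid.
Variables (M : Type) (mul : M -> M -> M) (e : M).
Hypothesis mulA : forall a b c, mul a (mul b c) = mul (mul a b) c.
Hypothesis mulee : mul e e = e.
Local Notation inC := (in_corner mul e).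
Local Notation unitC := (corner_unit mul e).
Local Notation assocC := (corner_associates mul e).

Lemma mul_ee a : mul (mul a e) e = mul a e.
Proof. by rewrite -mulA mulee. Qed.

Lemma in_cornerE x : inC x <-> mul (mul e x) e = x.
Proof.
split=> [[m ->] | <-]; last by exists x.
by rewrite !mulA mulee -mulA mulee.
Qed.

Lemma corner_mulel x : inC x -> mul e x = x.
Proof. by case=> m ->; rewrite !mulA mulee. Qed.

Lemma corner_muler x : inC x -> mul x e = x.
Proof. by case=> m ->; rewrite -mulA mulee. Qed.

Lemma in_corner_sandwich x : inC (mul (mul e x) e).
Proof. by exists x. Qed.

Lemma in_cornerM a b : inC a -> inC b -> inC (mul a b).
Proof.
move=> Ca Cb; apply/in_cornerE.
by rewrite (mulA e a b) (corner_mulel Ca) -mulA (corner_muler Cb).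
Qed.

Lemma corner_unit_e : unitC e.
Proof.
have Ce : inC e by apply/in_cornerE; rewrite !mulee.
by split=> //; exists e; rewrite mulee.
Qed.

Lemma corner_unitM a b : unitC a -> unitC b -> unitC (mul a b).
Proof.
move=> [Ca [a' [Ca' [aa' a'a]]]] [Cb [b' [Cb' [bb' b'b]]]].
split; first exact: in_cornerM.
exists (mul b' a'); split; first exact: in_cornerM.
split; first by rewrite -mulA (mulA b) bb' corner_mulel.
by rewrite -mulA (mulA a') a'a corner_mulel.
Qed.

Lemma corner_unit_inv a :
  unitC a -> exists a', unitC a' /\ mul a' a = e /\ mul a a' = e.
Proof. by move=> [Ca [a' [Ca' [aa' a'a]]]]; exists a'; do !split=> //; exists a. Qed.

Lemma corner_unitMr a b : unitC a -> inC b -> unitC (mul a b) <-> unitC b.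
Proof.
move=> Ua Cb; split=> [Uab | ]; last exact: corner_unitM.
have [a' [Ua' [a'a _]]] := corner_unit_inv Ua.
by have := corner_unitM Ua' Uab; rewrite mulA a'a corner_mulel.
Qed.

Lemma corner_unitMl a b : inC a -> unitC b -> unitC (mul a b) <-> unitC a.
Proof.
move=> Ca Ub; split=> [Uab | Ua]; last exact: corner_unitM.
have [b' [Ub' [_ bb']]] := corner_unit_inv Ub.
by have := corner_unitM Uab Ub'; rewrite -mulA bb' corner_muler.
Qed.

Lemma corner_associates_refl t : inC t -> assocC t t.
Proof.
move=> Ct; exists e, e; split; last split; try exact: corner_unit_e.
by rewrite corner_mulel ?corner_muler.
Qed.

Lemma corner_associates_sym a b : inC b -> assocC a b -> assocC b a.
Proof.
move=> Cb [u [v [Uu [Uv ->]]]].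
have [u' [Uu' [u'u _]]] := corner_unit_inv Uu.
have [v' [Uv' [_ vv']]] := corner_unit_inv Uv.
exists u', v'; do !split=> //.
by rewrite !mulA u'u corner_mulel // -mulA vv' corner_muler.
Qed.

Lemma corner_associatesMr a b t :
  unitC a -> inC b -> assocC (mul a b) t <-> assocC b t.
Proof.
move=> Ua Cb; have [a' [Ua' [a'a _]]] := corner_unit_inv Ua.
split=> [[u [v [Uu [Uv abE]]]] | [u [v [Uu [Uv bE]]]]].
  exists (mul a' u), v; split; [exact: corner_unitM | split=> //].
  by rewrite -(corner_mulel Cb) -a'a -mulA abE !mulA.
exists (mul a u), v; split; [exact: corner_unitM | split=> //].
by rewrite bE !mulA.
Qed.

Lemma corner_associatesMl a b t :
  inC a -> unitC b -> assocC (mul a b) t <-> assocC a t.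
Proof.
move=> Ca Ub; have [b' [Ub' [_ bb']]] := corner_unit_inv Ub.
split=> [[u [v [Uu [Uv abE]]]] | [u [v [Uu [Uv aE]]]]].
  exists u, (mul v b'); split=> //; split; first exact: corner_unitM.
  by rewrite -(corner_muler Ca) -bb' mulA abE !mulA.
exists u, (mul v b); split=> //; split; first exact: corner_unitM.
by rewrite aE !mulA.
Qed.
End CornerMonoid.

Section FiniteCornerMonoid.
Variables (M : finType) (mul : M -> M -> M) (e : M).
Hypothesis mulA : forall a b c, mul a (mul b c) = mul (mul a b) c.
Hypothesis mulee : mul e e = e.
Local Notation inC := (in_corner mul e).
Local Notation unitC := (corner_unit mul e).
Local Notation assocC := (corner_associates mul e).

(* Left multiplication by z is injective on the finite set eMe, hence onto. *)
Lemma corner_unit_of_right_inverse a z :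
  inC a -> inC z -> mul a z = e -> unitC a.
Proof.
move=> Ca Cz az.
pose C := [set t | mul (mul e t) e == t].
have inCP t : reflect (inC t) (t \in C).
  by rewrite inE; apply: (iffP eqP) => /(in_cornerE mulA mulee).
have zC_sub : [set mul z t | t in C] \subset C.
  by apply/subsetP => _ /imsetP [t /inCP Ct ->]; apply/inCP/(in_cornerM mulA mulee).
have z_inj : {in C &, injective (mul z)}.
  move=> t t' /inCP Ct /inCP Ct' ztt'.
  by rewrite -(corner_mulel mulA mulee Ct) -(corner_mulel mulA mulee Ct') -az -!mulA ztt'.
have /eqP zC : [set mul z t | t in C] == C.
  by rewrite eqEcard zC_sub card_in_imset // leqnn.
have : e \in [set mul z t | t in C] by rewrite zC; apply/inCP; exact: (corner_unit_e mulA mulee).1.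
case/imsetP => w /inCP Cw zw.
have aw : a = w by rewrite -(corner_muler mulA mulee Ca) zw mulA az (corner_mulel mulA mulee).
by split=> //; exists z; do !split=> //; rewrite aw -zw.
Qed.

Lemma corner_nonunit_mul a b :
  inC a -> inC b -> ~ unitC a -> ~ unitC b -> ~ unitC (mul a b).
Proof.
move=> Ca Cb nUa _ [_ [w [Cw [abw _]]]]; apply: nUa.
by apply: (corner_unit_of_right_inverse Ca (in_cornerM mulA mulee Cb Cw)); rewrite mulA.
Qed.

Lemma corner_nonunit_mul_not_associate a b t :
  inC a -> inC b -> ~ unitC a -> ~ unitC b ->
  corner_irreducible mul e t -> ~ assocC (mul a b) t.
Proof.
move=> Ca Cb nUa nUb [Ct [_ t_irr]] /(corner_associates_sym mulA mulee Ct).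
case=> u [v [Uu [Uv tE]]].
have t_split : t = mul (mul u a) (mul b v) by rewrite tE !mulA.
have [Uua | Ubv] := t_irr _ _
  (in_cornerM mulA mulee Uu.1 Ca) (in_cornerM mulA mulee Cb Uv.1) t_split.
- exact/nUa/(corner_unitMr mulA mulee Uu Ca).
- exact/nUb/(corner_unitMl mulA mulee Cb Uv).
Qed.
End FiniteCornerMonoid.

Local Notation pdec := excluded_middle_informative.

Lemma pdec_iff (P Q : Prop) : (P <-> Q) -> pdec P = pdec Q :> bool.
Proof.
case=> PQ QP; case: (pdec P) (pdec Q) => [] HP [] HQ //.
- by case: HQ; exact: PQ.
- by case: HP; exact: QP.
Qed.

Section KroneckerCornerRep.
Variables (M : finType) (mul : M -> M -> M) (e : M).
Hypothesis mulA : forall a b c, mul a (mul b c) = mul (mul a b) c.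
Hypothesis mulee : mul e e = e.
Variables (k : fieldType) (n' : nat) (p q : M).
Hypothesis p_irr : corner_irreducible mul e p.
Hypothesis q_irr : corner_irreducible mul e q.
Hypothesis pq_not_assoc : ~ corner_associates mul e p q.
Local Notation inC := (in_corner mul e).
Local Notation unitC := (corner_unit mul e).
Local Notation assocC := (corner_associates mul e).
Local Notation n := n'.+1.

Definition kronecker_corner_rep (x : M) : 'M[k]_(n + n) :=
  if pdec (unitC x) then 1%:M else
  block_mx 0 (if pdec (assocC x p) then 1%:M
              else if pdec (assocC x q) then jordan_block k n' else 0) 0 0.
Local Notation rho := kronecker_corner_rep.

Lemma kronecker_corner_rep_ext x y : (unitC x <-> unitC y) ->
  (assocC x p <-> assocC y p) -> (assocC x q <-> assocC y q) -> rho x = rho y.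
Proof.
move=> eq_unit eq_p eq_q.
by rewrite /rho (pdec_iff eq_unit) (pdec_iff eq_p) (pdec_iff eq_q).
Qed.

Lemma kronecker_corner_rep_unit x : unitC x -> rho x = 1%:M.
Proof. by rewrite /rho; case: pdec. Qed.

Lemma kronecker_corner_rep_nonunit x :
  ~ unitC x -> exists X, rho x = block_mx 0 X 0 0.
Proof. by move=> nUx; rewrite /rho; eexists; case: (pdec (unitC x)). Qed.

Lemma kronecker_corner_rep_zero x :
  ~ unitC x -> ~ assocC x p -> ~ assocC x q -> rho x = 0.
Proof.
move=> nUx nPx nQx; rewrite /rho.
case: (pdec (unitC x)) => /= [Ux | _]; first by case: nUx.
case: (pdec (assocC x p)) => /= [Px | _]; first by case: nPx.
by case: (pdec (assocC x q)) => /= [Qx | _]; [case: nQx | rewrite block_mx0].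
Qed.

Lemma kronecker_corner_rep_mul a b : inC a -> inC b -> rho (mul a b) = rho a *m rho b.
Proof.
move=> Ca Cb; case: (pdec (unitC a)) => [Ua | nUa].
  rewrite (kronecker_corner_rep_unit Ua) mul1mx.
  by apply: kronecker_corner_rep_ext; [exact: corner_unitMr|exact: corner_associatesMr..].
case: (pdec (unitC b)) => [Ub | nUb].
  rewrite (kronecker_corner_rep_unit Ub) mulmx1.
  by apply: kronecker_corner_rep_ext; [exact: corner_unitMl|exact: corner_associatesMl..].
have [X ->] := kronecker_corner_rep_nonunit nUa.
have [Y ->] := kronecker_corner_rep_nonunit nUb.
rewrite mulmx_block !mulmx0 !mul0mx !addr0 block_mx0.
by apply: kronecker_corner_rep_zero;
  [exact: corner_nonunit_mul | exact: corner_nonunit_mul_not_associate..].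
Qed.

Lemma kronecker_corner_rep_e : rho e = 1%:M.
Proof. exact/kronecker_corner_rep_unit/corner_unit_e. Qed.

Lemma kronecker_corner_rep_p : rho p = block_mx 0 1%:M 0 0.
Proof.
have [Cp [nUp _]] := p_irr; rewrite /rho.
case: (pdec (unitC p)) => /= [Up | _]; first by case: nUp.
by case: (pdec (assocC p p)) => /= [// | []]; exact: corner_associates_refl.
Qed.

Lemma kronecker_corner_rep_q : rho q = block_mx 0 (jordan_block k n') 0 0.
Proof.
have [Cq [nUq _]] := q_irr; rewrite /rho.
case: (pdec (unitC q)) => /= [Uq | _]; first by case: nUq.
case: (pdec (assocC q p)) => /= [qp | _].
  by case: pq_not_assoc; exact: (corner_associates_sym mulA mulee p_irr.1 qp).
by case: (pdec (assocC q q)) => /= [// | []]; exact: corner_associates_refl.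
Qed.

Lemma kronecker_corner_rep_idempotents :
  endo_idempotents_trivial (fun x => rho (mul (mul e x) e)).
Proof.
move=> E EE E_comm; apply: (kronecker_idempotent_trivial
  (@jordan_block_idempotent_trivial k n') EE).
- have /(in_cornerE mulA mulee) pE := p_irr.1.
  by have := E_comm p; rewrite pE kronecker_corner_rep_p.
- have /(in_cornerE mulA mulee) qE := q_irr.1.
  by have := E_comm q; rewrite qE kronecker_corner_rep_q.
Qed.
End KroneckerCornerRep.

(** * Coinduction from eMe to M *)

Section Coinduction.
Variables (k : fieldType) (M : finType) (mul : M -> M -> M) (one e : M).
Hypothesis mulA : forall a b c, mul a (mul b c) = mul (mul a b) c.
Hypothesis mul1m : forall a, mul one a = a.
Hypothesis mulee : mul e e = e.
Local Notation inC := (in_corner mul e).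
Local Notation ne x := (mul (mul e x) e).
Variables (d : nat) (rho : M -> 'M[k]_d).
Hypothesis rho_mul : forall a b, inC a -> inC b -> rho (mul a b) = rho a *m rho b.
Hypothesis rho_e : rho e = 1%:M.
Hypothesis rho_idempotents : endo_idempotents_trivial (fun x => rho (ne x)).

(* A row vector of length #|M| * d encodes a function phi : M -> k^d,
   with phi y = phi *m eval_at y. *)
Local Notation D := (#|M| * d)%N.

Definition fun_index (y : M) (j : 'I_d) : 'I_D := mxvec_index (enum_rank y) j.

Definition eval_at (y : M) : 'M[k]_(D, d) := \matrix_(a, j) (a == fun_index y j)%:R.

Lemma mulmx_eval_at m (A : 'M[k]_(m, D)) y :
  A *m eval_at y = \matrix_(i, j) A i (fun_index y j).
Proof.
apply/matrixP => i j; rewrite !mxE (bigD1 (fun_index y j)) //= mxE eqxx mulr1.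
by rewrite big1 ?addr0 // => a /negbTE a_neq; rewrite mxE a_neq mulr0.
Qed.

Lemma eval_at_ext m (A B : 'M[k]_(m, D)) :
  (forall y, A *m eval_at y = B *m eval_at y) -> A = B.
Proof.
move=> AB; apply/matrixP => i a; case/mxvec_indexP: a => r j.
have /matrixP/(_ i j) := AB (enum_val r).
by rewrite !mulmx_eval_at !mxE /fun_index enum_valK.
Qed.

Lemma tr_eval_at_eval_at y z : (eval_at y)^T *m eval_at z = (y == z)%:R%:M.
Proof.
apply/matrixP => i j; rewrite mulmx_eval_at !mxE /fun_index.
rewrite (inj_eq (@cast_ord_inj _ _ _)) (inj_eq (@enum_rank_inj _)) xpair_eqE.
by rewrite (inj_eq (@enum_rank_inj _)) eq_sym [j == i]eq_sym; case: (y == z); case: (i == j).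
Qed.

Lemma sum_eval_at_tr_eval_at m (F : M -> 'M[k]_(m, d)) z :
  (\sum_y F y *m (eval_at y)^T) *m eval_at z = F z.
Proof.
rewrite mulmx_suml (bigD1 z) //= -mulmxA tr_eval_at_eval_at eqxx mulmx1.
rewrite big1 ?addr0 // => y /negbTE yz.
by rewrite -mulmxA tr_eval_at_eval_at yz raddf0 mulmx0.
Qed.

Definition translate (a : M) : 'M[k]_D := \sum_z eval_at (mul a z) *m (eval_at z)^T.

Lemma translate_eval_at a y : translate a *m eval_at y = eval_at (mul a y).
Proof. exact: sum_eval_at_tr_eval_at. Qed.

Lemma translate1 : translate one = 1%:M.
Proof. by apply: eval_at_ext => y; rewrite translate_eval_at mul1m mul1mx. Qed.

Lemma translateM a b : translate (mul a b) = translate a *m translate b.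
Proof. by apply: eval_at_ext => y; rewrite -mulmxA !translate_eval_at mulA. Qed.

(* The coinduced module Hom_eMe(kMe, V): the functions phi with
   phi (y m) = phi y *m rho m for m in eMe, on which a in M acts by
   (phi . a) y = phi (a y). *)
Definition coind_space : 'M[k]_D := (\bigcap_(yx : M * M)
  kermx (eval_at (mul yx.1 (ne yx.2)) - eval_at yx.1 *m rho (ne yx.2)))%MS.

Lemma coind_spaceP m (A : 'M[k]_(m, D)) : (A <= coind_space)%MS <->
  forall y x, A *m eval_at (mul y (ne x)) = A *m eval_at y *m rho (ne x).
Proof.
split=> [/sub_bigcapmxP A_sub y x | A_eq]; last first.
  by apply/sub_bigcapmxP => -[y x] _; rewrite sub_kermx mulmxBr mulmxA A_eq subrr.
by have /(_ isT) := A_sub (y, x); rewrite sub_kermx mulmxBr mulmxA subr_eq0 => /eqP.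
Qed.

Lemma coind_space_translate m (A : 'M[k]_(m, D)) a :
  (A <= coind_space)%MS -> (A *m translate a <= coind_space)%MS.
Proof.
move/coind_spaceP=> A_eq; apply/coind_spaceP => y x.
by rewrite -!(mulmxA A) !translate_eval_at mulmxA mulA A_eq.
Qed.

Lemma coind_space_eval_mule m (A : 'M[k]_(m, D)) y :
  (A <= coind_space)%MS -> A *m eval_at (mul y e) = A *m eval_at y.
Proof.
by move/coind_spaceP/(_ y e); rewrite !mulee rho_e mulmx1.
Qed.

Lemma coind_space_eval_corner m (A : 'M[k]_(m, D)) x :
  (A <= coind_space)%MS -> A *m eval_at (ne x) = A *m eval_at e *m rho (ne x).
Proof. by move/coind_spaceP/(_ e x) => <-; rewrite !mulA mulee. Qed.

Definition extend : 'M[k]_(d, D) := \sum_y rho (ne y) *m (eval_at y)^T.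

Lemma extend_eval_at y : extend *m eval_at y = rho (ne y).
Proof. exact: sum_eval_at_tr_eval_at. Qed.

Lemma extend_sub : (extend <= coind_space)%MS.
Proof.
apply/coind_spaceP => y x; rewrite !extend_eval_at -rho_mul; try exact: in_corner_sandwich.
by rewrite !mulA !(mul_ee mulA mulee).
Qed.

Lemma rank_coind_space : (d <= \rank coind_space <= D)%N.
Proof.
rewrite rank_leq_col andbT; apply: leq_trans (mxrankS extend_sub).
by have := mxrankM_maxl extend (eval_at e); rewrite extend_eval_at !mulee rho_e mxrank1.
Qed.

Fact coind_basis_key : unit. Proof. by []. Qed.
Definition coind_basis : 'M[k]_(\rank coind_space, D) :=
  locked_with coind_basis_key (row_base coind_space).
Local Notation B := coind_basis.

Definition coind_rep (a : M) : 'M[k]_(\rank coind_space) :=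
  B *m translate a *m pinvmx B.

Lemma coind_basis_sub : (B <= coind_space)%MS.
Proof. by rewrite [B]unlock eq_row_base. Qed.

Lemma coind_basisP m (A : 'M[k]_(m, D)) : (A <= coind_space)%MS -> (A <= B)%MS.
Proof. by rewrite [B]unlock eq_row_base. Qed.

Lemma coind_basis_free : row_free B.
Proof. by rewrite [B]unlock row_base_free. Qed.

Lemma coind_rep_basis a : coind_rep a *m B = B *m translate a.
Proof. by rewrite mulmxKpV // coind_basisP // coind_space_translate // coind_basis_sub. Qed.

Lemma coind_rep_is_rep : is_rep mul one coind_rep.
Proof.
split=> [|a b]; apply: (row_free_inj coind_basis_free) => /=.
  by rewrite coind_rep_basis translate1 mulmx1 mul1mx.
by rewrite -mulmxA !coind_rep_basis mulmxA coind_rep_basis translateM mulmxA.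
Qed.

Lemma coind_basis_mul_sub m (A : 'M[k]_(m, \rank coind_space)) :
  (A *m B <= coind_space)%MS.
Proof. exact: submx_trans (submxMl _ _) coind_basis_sub. Qed.

Fact extend_coord_key : unit. Proof. by []. Qed.
Definition extend_coord : 'M[k]_(d, \rank coind_space) :=
  locked_with extend_coord_key (extend *m pinvmx B).
Local Notation g := extend_coord.

Lemma extend_coord_basis : g *m B = extend.
Proof. by rewrite [g]unlock mulmxKpV // coind_basisP // extend_sub. Qed.

Lemma coind_rep_e : coind_rep e = B *m eval_at e *m g.
Proof.
apply: (row_free_inj coind_basis_free); rewrite /= coind_rep_basis -mulmxA extend_coord_basis.
apply: eval_at_ext => y; rewrite -!mulmxA translate_eval_at extend_eval_at mulmxA.
by rewrite -(coind_space_eval_mule _ coind_basis_sub) (coind_space_eval_corner _ coind_basis_sub).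
Qed.

Lemma extend_coord_rep_e : g *m coind_rep e = g.
Proof.
apply: (row_free_inj coind_basis_free); rewrite /= -mulmxA coind_rep_basis mulmxA.
apply: eval_at_ext => y; rewrite extend_coord_basis -mulmxA translate_eval_at.
by rewrite !extend_eval_at !mulA mulee.
Qed.

Lemma rho_extend_coord x : rho (ne x) *m g = g *m coind_rep (ne x).
Proof.
apply: (row_free_inj coind_basis_free) => /=.
rewrite -mulmxA extend_coord_basis -mulmxA coind_rep_basis mulmxA extend_coord_basis.
apply: eval_at_ext => y; rewrite -!mulmxA translate_eval_at !extend_eval_at.
rewrite -rho_mul; try exact: in_corner_sandwich.
by rewrite !mulA !(mul_ee mulA mulee) mulee.
Qed.

Section CoindEndomorphisms.
Variable E : 'M[k]_(\rank coind_space).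
Hypothesis E_comm : forall a, E *m coind_rep a = coind_rep a *m E.

Definition restrict_endo : 'M[k]_d := g *m E *m B *m eval_at e.

Lemma endo_eval_at_mule y :
  E *m B *m eval_at (mul y e) = coind_rep y *m (E *m B *m eval_at e).
Proof.
rewrite -translate_eval_at mulmxA -(mulmxA E) -coind_rep_basis.
by rewrite mulmxA E_comm !mulmxA.
Qed.

(* Since phi y = (phi . y) e, an endomorphism commuting with M is determined
   by what it does to values at e. *)
Lemma endo_eval_at y :
  E *m B *m eval_at y = coind_rep y *m B *m eval_at e *m restrict_endo.
Proof.
have E_at_e : E *m B *m eval_at e = B *m eval_at e *m restrict_endo.
  by rewrite -{1}mulee endo_eval_at_mule coind_rep_e /restrict_endo !mulmxA.
rewrite -(coind_space_eval_mule _ (coind_basis_mul_sub E)) endo_eval_at_mule E_at_e.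
by rewrite !mulmxA.
Qed.

Lemma restrict_endo_eq0 : restrict_endo = 0 -> E = 0.
Proof.
move=> r0; apply: (row_free_inj coind_basis_free); rewrite /= mul0mx.
by apply: eval_at_ext => y; rewrite endo_eval_at r0 mulmx0 mul0mx.
Qed.

Lemma restrict_endo_idem : E *m E = E -> restrict_endo *m restrict_endo = restrict_endo.
Proof.
move=> EE; rewrite /restrict_endo.
have -> : g *m E *m B *m eval_at e *m (g *m E *m B *m eval_at e)
    = g *m E *m (B *m eval_at e *m g) *m E *m B *m eval_at e by rewrite !mulmxA.
by rewrite -coind_rep_e -(mulmxA g E) E_comm mulmxA extend_coord_rep_e -(mulmxA g E E) EE.
Qed.

Lemma restrict_endo_comm x : restrict_endo *m rho (ne x) = rho (ne x) *m restrict_endo.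
Proof.
rewrite /restrict_endo !mulmxA rho_extend_coord -(mulmxA g (coind_rep _)) -E_comm.
rewrite (mulmxA g E) -(mulmxA (g *m E) (coind_rep _)) coind_rep_basis.
rewrite !mulmxA -(mulmxA _ (translate _)) translate_eval_at.
by rewrite (mul_ee mulA mulee) (coind_space_eval_corner x (coind_basis_mul_sub (g *m E))).
Qed.
End CoindEndomorphisms.

Lemma restrict_endo1B E : restrict_endo (1%:M - E) = 1%:M - restrict_endo E.
Proof.
by rewrite /restrict_endo mulmxBr mulmx1 !mulmxBl extend_coord_basis extend_eval_at !mulee rho_e.
Qed.

Lemma coind_rep_idempotents : endo_idempotents_trivial coind_rep.
Proof.
move=> E EE E_comm.
have [r0 | r1] := rho_idempotents (restrict_endo_idem E_comm EE) (restrict_endo_comm E_comm).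
  by left; exact: restrict_endo_eq0 E_comm r0.
have E1_comm a : (1%:M - E) *m coind_rep a = coind_rep a *m (1%:M - E).
  by rewrite mulmxBl mulmxBr mul1mx mulmx1 E_comm.
right; apply/eqP; rewrite eq_sym -subr_eq0; apply/eqP/(restrict_endo_eq0 E1_comm).
by rewrite restrict_endo1B r1 subrr.
Qed.
End Coinduction.

(** * Indecomposability and dimensions *)

Lemma rep_iso_dim (k : fieldType) (M : Type) n m
    (rho : M -> 'M[k]_n) (sigma : M -> 'M[k]_m) :
  rep_iso rho sigma -> n = m.
Proof.
case=> P [Q [PQ [QP _]]]; apply/eqP; rewrite eqn_leq.
have := mxrankM_maxl P Q; have := mxrankM_maxl Q P.
rewrite PQ QP !mxrank1 => le_m le_n.
by rewrite (leq_trans le_n (rank_leq_col P)) (leq_trans le_m (rank_leq_col Q)).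
Qed.

Lemma idempotents_trivial_indecomposable (k : fieldType) (M : Type)
    (mul : M -> M -> M) (one : M) n (rho : M -> 'M[k]_n) :
  (0 < n)%N -> endo_idempotents_trivial rho -> rep_indecomposable mul one rho.
Proof.
move=> n_gt0 rho_idem; split=> // a b r1 r2 _ _ a_gt0 b_gt0 [P [Q [PQ [QP rhoP]]]].
pose Pr : 'M[k]_(a + b) := block_mx 1%:M 0 0 0.
have PrPr : Pr *m Pr = Pr by rewrite mulmx_block !mulmx0 !mul0mx !mulmx1 !addr0.
have Pr_comm x : Pr *m rep_dsum r1 r2 x = rep_dsum r1 r2 x *m Pr.
  by rewrite /rep_dsum !mulmx_block !mulmx0 !mul0mx !mulmx1 !mul1mx ?addr0 ?add0r.
have Qrho x : Q *m rho x = rep_dsum r1 r2 x *m Q.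
  by rewrite -[Q *m rho x]mulmx1 -PQ mulmxA -(mulmxA Q) rhoP mulmxA QP mul1mx.
pose F := P *m Pr *m Q.
have FF : F *m F = F.
  by rewrite /F !mulmxA -(mulmxA (P *m Pr) Q P) QP mulmx1 -(mulmxA P) PrPr.
have F_comm x : F *m rho x = rho x *m F.
  by rewrite /F -(mulmxA _ Q) Qrho mulmxA -(mulmxA P) Pr_comm mulmxA -rhoP !mulmxA.
have QFP : Q *m F *m P = Pr by rewrite /F !mulmxA QP mul1mx -mulmxA QP mulmx1.
case: (rho_idem F FF F_comm) => F_eq; move: QFP; rewrite F_eq.
  rewrite mulmx0 mul0mx => /matrixP/(_ (lshift b (Ordinal a_gt0)) (lshift b (Ordinal a_gt0))).
  by rewrite block_mxEul !mxE eqxx => /eqP; rewrite eq_sym oner_eq0.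
rewrite mulmx1 QP => /matrixP/(_ (rshift a (Ordinal b_gt0)) (rshift a (Ordinal b_gt0))).
by rewrite block_mxEdr !mxE eqxx => /eqP; rewrite oner_eq0.
Qed.

Lemma sandwiched_injective c (lo f : nat -> nat) :
  (forall i, lo i <= f i <= c * lo i)%N -> (forall i j, i < j -> c * lo i < lo j)%N ->
  injective f.
Proof.
move=> f_bounds lo_gap.
have f_lt i j : (i < j)%N -> (f i < f j)%N.
  move=> lt_ij; have /andP [_ fi_le] := f_bounds i; have /andP [fj_ge _] := f_bounds j.
  exact: leq_ltn_trans fi_le (leq_trans (lo_gap i j lt_ij) fj_ge).
move=> i j fij; apply/eqP; apply: contraT; rewrite neq_ltn.
by case/orP => /f_lt; rewrite fij ltnn.
Qed.

Lemma geometric_bounds_gap c i j : (i < j)%N ->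
  (c * ((c.+1 ^ i.+1).+1 + (c.+1 ^ i.+1).+1) < (c.+1 ^ j.+1).+1 + (c.+1 ^ j.+1).+1)%N.
Proof.
move=> lt_ij.
have ge_i : (c.+1 <= c.+1 ^ i.+1)%N by rewrite -{1}(expn1 c.+1) leq_pexp2l.
have ge_j : (c.+1 * c.+1 ^ i.+1 <= c.+1 ^ j.+1)%N by rewrite -expnS leq_pexp2l.
nia.
Qed.

Theorem corollary9 (M : finType) (mul : M -> M -> M) (one : M)
  (k : fieldType) :
  is_monoid mul one ->
  (exists e : M, idempotent_el mul e /\
     exists p q : M, corner_irreducible mul e p /\ corner_irreducible mul e q /\
       ~ corner_associates mul e p q) ->
  infinite_rep_type k mul one.
Proof.
move=> [mulA [mul1m _]] [e [mulee [p [q [p_irr [q_irr pq_not_assoc]]]]]] N.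
pose n' i := (#|M|.+1 ^ i.+1)%N.
pose V i := kronecker_corner_rep mul e k (n' i) p q.
pose dim i := \rank (coind_space mul e (V i)).
have V_mul i := kronecker_corner_rep_mul mulA mulee k (n' i) p_irr q_irr.
have V_e i := kronecker_corner_rep_e mulA mulee k (n' i) p q.
have V_idem i := kronecker_corner_rep_idempotents mulA mulee
  (k := k) (n' := n' i) p_irr q_irr pq_not_assoc.
have dim_bounds i : ((n' i).+1 + (n' i).+1 <= dim i <= #|M| * ((n' i).+1 + (n' i).+1))%N.
  exact: (rank_coind_space mulA mulee (V_mul i) (V_e i)).
have dim_inj : injective dim.
  by apply: sandwiched_injective dim_bounds _ => i j; exact: geometric_bounds_gap.
exists (fun i : 'I_N => dim i), (fun i => coind_rep mul e (V i)); split.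
  move=> i; split; first exact: coind_rep_is_rep.
  apply: idempotents_trivial_indecomposable.
    by case/andP: (dim_bounds i) => + _; exact: leq_trans.
  exact: (coind_rep_idempotents mulA mulee (V_mul i) (V_e i) (V_idem i)).
by move=> i j ij /rep_iso_dim /dim_inj /val_inj /eqP; rewrite (negPf ij).
Qed.
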